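(* Let $\lambda\in\mathbb{R}\setminus\{0\}$, $k\in\mathbb{Z}$, $u\in\mathbb{C}$ with $u\neq 1$, and $x\in\mathbb{R}$. Then for every integer $n\geq 0$, \[ FG_{n,\lambda}^{(k)}(x,u)=n\sum_{m=0}^{n-1}\frac{\binom{n-1}{m}}{m+1}\sum_{j=1}^{m+1}\frac{(1)_{j,\lambda}}{j^{k-1}}S_{1,\lambda}(m+1,j)\,FG_{n-1-m,\lambda}(x,u), \] where $FG_{l,\lambda}(x,u)$ are defined by $\frac{1-u}{e_\lambda(t)-u}e_\lambda^{x}(t)=\sum_{l\ge 0}FG_{l,\lambda}(x,u)\frac{t^l}{l!}$.
   Context: All generating functions are formal power series in $t$. For $z\in\mathbb{C}$: $(z)_{0,\lambda}=1$ and $(z)_{n,\lambda}=z(z-\lambda)(z-2\lambda)\cdots(z-(n-1)\lambda)$ for $n\ge1$. The degenerate exponential is $e_\lambda^{z}(t)=(1+\lambda t)^{z/\lambda}=\sum_{n\ge0}(z)_{n,\lambda}\frac{t^n}{n!}$, and $e_\lambda(t)=e_\lambda^{1}(t)$. Its compositional inverse is $\log_\lambda(1+t)=\frac{1}{\lambda}\big((1+t)^\lambda-1\big)$. The degenerate Stirling numbers of the first kind are defined by $\frac{1}{j!}(\log_\lambda(1+t))^j=\sum_{n\ge j}S_{1,\lambda}(n,j)\frac{t^n}{n!}$. The modified degenerate polyexponential function is $\mathrm{Ei}_{k,\lambda}(x)=\sum_{n\ge1}\frac{(1)_{n,\lambda}}{n^k(n-1)!}x^n$. The degenerate poly-Frobenius-Genocchi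 polynomials are defined by $\sum_{n\ge0}FG_{n,\lambda}^{(k)}(x,u)\frac{t^n}{n!}=\frac{(1-u)\,\mathrm{Ei}_{k,\lambda}(\log_\lambda(1+t))}{e_\lambda(t)-u}e_\lambda^{x}(t)$. *)

(* Formal power series over a field are represented by their
   (ordinary) coefficient sequences  f : nat -> C,  f n = [t^n] f. *)
From HB Require Import structures.
From mathcomp Require Import all_boot all_order all_algebra.
From mathcomp Require Import reals.
From mathcomp Require Import complex.
Set Implicit Arguments. Unset Strict Implicit. Unset Printing Implicit Defensive.
Import Order.TTheory GRing.Theory Num.Theory.
Local Open Scope ring_scope.

Section FPS.
Variable C : fieldType.

Definition fps := nat -> C.

Definition fps_one : fps := fun n => if n == 0%N then 1 else 0.
Definition fps_const (c : C) : fps := fun n => if n == 0%N then c else 0.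
Definition fps_add (f g : fps) : fps := fun n => f n + g n.
Definition fps_sub (f g : fps) : fps := fun n => f n - g n.
Definition fps_scale (c : C) (f : fps) : fps := fun n => c * f n.
Definition fps_mul (f g : fps) : fps :=
  fun n => \sum_(i < n.+1) f i * g (n - i)%N.
Fixpoint fps_pow (f : fps) (j : nat) : fps :=
  if j is j'.+1 then fps_mul f (fps_pow f j') else fps_one.
(* composition f(g(t)), meaningful when g 0 = 0 *)
Definition fps_comp (f g : fps) : fps :=
  fun n => \sum_(j < n.+1) f j * fps_pow g j n.
(* multiplicative inverse of f, for f 0 <> 0:
   1/(c + h) = sum_j (-1)^j h^j / c^(j+1) with c = f 0, h = f - c *)
Definition fps_inv (f : fps) : fps :=
  fun n => \sum_(j < n.+1)
     (-1) ^+ j * (f 0%N)^-1 ^+ j.+1 * fps_pow (fps_sub f (fps_const (f 0%N))) j n.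

Definition dfall (z : C) (n : nat) (lam : C) : C :=
  \prod_(i < n) (z - i%:R * lam).

(* degenerate exponential e_lam^z(t) = sum (z)_{n,lam} t^n/n! *)
Definition dexp (lam z : C) : fps := fun n => dfall z n lam / n`!%:R.

(* binomial series (1+t)^a = sum (a)_{n,1} t^n / n! *)
Definition binser (a : C) : fps := fun n => dfall a n 1 / n`!%:R.

(* log_lam(1+t) = ((1+t)^lam - 1)/lam *)
Definition dlog (lam : C) : fps := fps_scale lam^-1 (fps_sub (binser lam) fps_one).

(* degenerate Stirling numbers of the first kind:
   (1/j!) (log_lam(1+t))^j = sum_n S1(n,j) t^n/n! *)
Definition S1 (lam : C) (n j : nat) : C :=
  n`!%:R * (j`!%:R^-1 * fps_pow (dlog lam) j n).

Definition Ei (k : int) (lam : C) : fps :=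
  fun n => if n == 0%N then 0 else dfall 1 n lam / ((n%:R : C) ^ k * (n.-1)`!%:R).

Definition FGk (k : int) (lam x u : C) (n : nat) : C :=
  n`!%:R * fps_mul (fps_scale (1 - u) (fps_comp (Ei k lam) (dlog lam)))
                   (fps_mul (fps_inv (fps_sub (dexp lam 1) (fps_const u)))
                            (dexp lam x)) n.

Definition FG (lam x u : C) (n : nat) : C :=
  n`!%:R * fps_mul (fps_scale (1 - u) (fps_inv (fps_sub (dexp lam 1) (fps_const u))))
                   (dexp lam x) n.
End FPS.

(* The generating function of FG^{(k)} is Ei_{k,lam}(log_lam(1+t)) times that
   of FG.  The series Ei_{k,lam}(log_lam(1+t)) has no constant term, and its
   coefficient of t^(m+1)/(m+1)! is sum_j (1)_{j,lam} / j^(k-1) S1(m+1, j),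
   because (1)_{j,lam} / (j^k (j-1)!) = (1)_{j,lam} / j^(k-1) * 1/j!.  Reading
   off the t^n coefficient of the product then gives the formula, with
   n!/((m+1)! (n-1-m)!) = n C(n-1, m)/(m+1). *)
From HB Require Import structures.
From mathcomp Require Import all_boot all_order all_algebra.
From mathcomp Require Import reals.
From mathcomp Require Import complex.
From mathcomp Require Import ring.
Import Order.TTheory GRing.Theory Num.Theory.
Local Open Scope ring_scope.

Section FormalPowerSeries.
Variable C : fieldType.
Implicit Types (c : C) (f g : fps C).

Lemma fps_mul_scalel c f g n : fps_mul (fps_scale c f) g n = c * fps_mul f g n.
Proof. by rewrite /fps_mul mulr_sumr; apply: eq_bigr => i _; rewrite mulrA. Qed.

Lemma fps_mul_scaler c f g n : fps_mul f (fps_scale c g) n = c * fps_mul f g n.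
Proof.
by rewrite /fps_mul mulr_sumr; apply: eq_bigr => i _; rewrite mulrCA.
Qed.

Lemma fps_comp0 f g : f 0%N = 0 -> fps_comp f g 0 = 0.
Proof. by move=> f0; rewrite /fps_comp big_ord1 f0 mul0r. Qed.

Lemma fps_compS f g n : f 0%N = 0 ->
  fps_comp f g n.+1 = \sum_(1 <= j < n.+2) f j * fps_pow g j n.+1.
Proof.
move=> f0; rewrite /fps_comp big_ord_recl f0 mul0r add0r.
by rewrite big_add1 /= big_mkord.
Qed.

End FormalPowerSeries.

Section ExponentialProduct.
Variable C : numFieldType.
Implicit Types (a b : fps C).

Lemma fact_natr_neq0 n : (n`!%:R : C) != 0.
Proof. by rewrite pnatr_eq0 -lt0n fact_gt0. Qed.

Lemma natr_binE n m : (m <= n)%N ->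
  ('C(n, m)%:R : C) = n`!%:R / (m`!%:R * (n - m)`!%:R).
Proof.
move=> le_mn; rewrite -(bin_fact le_mn) !natrM mulfK //.
by rewrite mulf_neq0 // fact_natr_neq0.
Qed.

Lemma egf_mul_shift a b n : a 0%N = 0 ->
  n`!%:R * fps_mul a b n =
  n%:R * \sum_(m < n) ('C(n.-1, m)%:R / m.+1%:R
                       * (m.+1`!%:R * a m.+1) * ((n.-1 - m)`!%:R * b (n.-1 - m)%N)).
Proof.
move=> a0; case: n => [|n]; first by rewrite /fps_mul big_ord1 a0 !mul0r mulr0.
rewrite /fps_mul big_ord_recl a0 mul0r add0r !mulr_sumr.
apply: eq_bigr => -[m /= lt_mn] _; rewrite subSS natr_binE; last by rewrite -ltnS.
rewrite !factS !natrM; field.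
by rewrite nat1r pnatr_eq0 !fact_natr_neq0.
Qed.

Lemma Ei_comp_dlog_term k lam n j : (0 < j)%N ->
  n`!%:R * (Ei k lam j * fps_pow (dlog lam) j n) =
  dfall 1 j lam / (j%:R : C) ^ (k - 1) * S1 lam n j.
Proof.
case: j => // j _; rewrite /Ei /S1 /=.
have j1_neq0 : (j.+1%:R : C) != 0 by rewrite pnatr_eq0.
have jk_neq0 : (j.+1%:R : C) ^ (k - 1) != 0.
  by rewrite expfz_eq0 (negPf j1_neq0) andbF.
rewrite -{1}(subrK 1 k) expfzDr // expr1z factS natrM.
by field; rewrite nat1r fact_natr_neq0 j1_neq0 jk_neq0.
Qed.

Lemma Ei_comp_dlogS k lam m :
  m.+1`!%:R * fps_comp (Ei k lam) (dlog lam) m.+1 =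
  \sum_(1 <= j < m.+2) dfall 1 j lam / (j%:R : C) ^ (k - 1) * S1 lam m.+1 j.
Proof.
rewrite fps_compS // mulr_sumr; apply: eq_big_nat => j /andP[j_gt0 _].
exact: Ei_comp_dlog_term.
Qed.

End ExponentialProduct.

Local Open Scope complex_scope.

Theorem theorem1 (R : realType) (lam : R) (k : int) (u : R[i]) (x : R)
    (hlam : lam != 0) (hu : u != 1) (n : nat) :
  FGk k lam%:C x%:C u n =
  n%:R * \sum_(m < n)
    ('C(n.-1, m)%:R / m.+1%:R *
      \sum_(1 <= j < m.+2)
        (dfall 1 j lam%:C / (j%:R : R[i]) ^ (k - 1) * S1 lam%:C m.+1 j
          * FG lam%:C x%:C u (n.-1 - m)%N)).
Proof.
set G := fps_scale (1 - u)
  (fps_mul (fps_inv (fps_sub (dexp lam%:C 1) (fps_const u))) (dexp lam%:C x%:C)).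
have FGE l : FG lam%:C x%:C u l = l`!%:R * G l by rewrite /FG fps_mul_scalel.
rewrite /FGk fps_mul_scalel -fps_mul_scaler -/G.
rewrite egf_mul_shift ?fps_comp0 //; congr (_ * _); apply: eq_bigr => m _.
by rewrite Ei_comp_dlogS FGE -mulrA mulr_suml.
Qed.
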